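(* Let $\mathcal I$ be a Stable Marriage instance containing $r$ men $m^d_1,\dots,m^d_r$ and $r$ women $w^d_1,\dots,w^d_r$ such that for every $i\in[r]$ (indices taken modulo $r$) the preference list of $m^d_i$ begins with $w^d_i\succ w^d_{i+1}\succ\dots\succ w^d_{r+i-1}$ and the preference list of $w^d_i$ begins with $m^d_i\succ m^d_{i+1}\succ\dots\succ m^d_{r+i-1}$ (the remaining agents follow in arbitrary order). Then for every list $S$ of at most $r-1$ swap operations, every stable matching of the instance $\mathcal I[S]$ contains the pairs $\{m^d_i,w^d_i\}$ for all $i\in[r]$.
   Context: A Stable Marriage (SM) instance consists of a set $U$ of men and a set $W$ of women with $|U|=|W|=n$, and for every agent a strict total order (preference list) over all agents of the opposite gender. A matching is a set of man–woman pairs in which each agent appears at most once. A man–woman pair $\{m,w\}$ blocks a matching $M$ if ($m$ is unassigned or prefers $w$ to his partner in $M$) and ($w$ is unassigned or prefers $m$ to her partner in $M$); $M$ is stable if no pair blocks it. A swap operation exchanges two adjacent agents in the preference list of one agent (of the whole instance, possibly a non-dummy agent or a dummy agent). $\mathcal I[S]$ denotes the instance obtained by applying the swaps in the list $S$ to $\mathcal I$. *)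

From mathcomp Require Import all_boot.
Set Implicit Arguments. Unset Strict Implicit. Unset Printing Implicit Defensive.

(* Stable Marriage instance with n men and n women, both indexed by 'I_n.
   Preference lists are sequences, most preferred first. *)
Record SMinstance (n : nat) := SMI {
  mpref : 'I_n -> seq 'I_n;
  wpref : 'I_n -> seq 'I_n
}.

Definition valid_instance n (I : SMinstance n) : Prop :=
  (forall m, perm_eq (mpref I m) (enum 'I_n)) /\
  (forall w, perm_eq (wpref I w) (enum 'I_n)).

Definition prefers n (l : seq 'I_n) (x y : 'I_n) : bool := index x l < index y l.

Definition is_matching n (M : {set 'I_n * 'I_n}) : Prop :=
  (forall m w w', (m, w) \in M -> (m, w') \in M -> w = w') /\
  (forall m m' w, (m, w) \in M -> (m', w) \in M -> m = m').

Definition blocks n (I : SMinstance n) (M : {set 'I_n * 'I_n}) (m w : 'I_n) : Prop :=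
  (forall w', (m, w') \in M -> prefers (mpref I m) w w') /\
  (forall m', (m', w) \in M -> prefers (wpref I w) m m').

Definition stable_matching n (I : SMinstance n) (M : {set 'I_n * 'I_n}) : Prop :=
  is_matching M /\ forall m w, ~ blocks I M m w.

Definition swap_seq T (j : nat) (s : seq T) : seq T :=
  take j s ++ rev (take 2 (drop j s)) ++ drop j.+2 s.

(* A swap operation: on a man (sw_man = true) or a woman (false),
   exchanging positions sw_pos and sw_pos+1 in that agent's list. *)
Record swap (n : nat) := Swap {
  sw_man : bool;
  sw_agent : 'I_n;
  sw_pos : nat
}.

Definition valid_swap n (s : swap n) : bool := (sw_pos s).+1 < n.

Definition apply_swap n (I : SMinstance n) (s : swap n) : SMinstance n :=
  if sw_man s then
    SMI (fun m => if m == sw_agent s then swap_seq (sw_pos s) (mpref I m) else mpref I m)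
        (wpref I)
  else
    SMI (mpref I)
        (fun w => if w == sw_agent s then swap_seq (sw_pos s) (wpref I w) else wpref I w).

Definition apply_swaps n (I : SMinstance n) (S : seq (swap n)) : SMinstance n :=
  foldl (@apply_swap n) I S.

From mathcomp Require Import all_boot zify.
From Stdlib Require Import Classical.
Set Implicit Arguments. Unset Strict Implicit. Unset Printing Implicit Defensive.

(* Suppose the dummy pair {m^d_k, w^d_k} is not in a stable matching M of
   I[S].  Since it does not block, one of its two agents, say m^d_k, has a
   partner w' whom he ranks above w^d_k in I[S].  In I, w^d_k is first on his
   list, and a swap moves an entry by at most one position relative to
   another, so w' was at position at most #(swaps on m^d_k) < r in I; hence
   w' = w^d_t with t at cyclic distance cdist k t <= #(swaps on m^d_k), and
   the pair of index t is unmatched too.  This gives a map f on the unmatched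
   indices with f k <> k; a purely combinatorial covering argument on the
   cycle Z/rZ shows that sum_k cdist k (f k) >= r, while the swaps charged to
   distinct indices are distinct, so that sum is at most |S| <= r - 1. *)

(* The preference list of agent a on side b (true = men, false = women). *)
Definition pref n (b : bool) (I : SMinstance n) (a : 'I_n) : seq 'I_n :=
  if b then mpref I a else wpref I a.

Definition swaps_on n (b : bool) (a : 'I_n) (s : swap n) : bool :=
  (sw_man s == b) && (sw_agent s == a).

Definition swap_seqs (T : Type) (l : seq T) (ps : seq nat) : seq T :=
  foldl (fun l p => swap_seq p l) l ps.

Lemma pref_apply_swap n b (I : SMinstance n) s a :
  pref b (apply_swap I s) a =
  if swaps_on b a s then swap_seq (sw_pos s) (pref b I a) else pref b I a.
Proof.
by rewrite /pref /apply_swap /swaps_on; case: b; case: (sw_man s); rewrite //= eq_sym.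
Qed.

Lemma pref_apply_swaps n b (I : SMinstance n) (S : seq (swap n)) a :
  pref b (apply_swaps I S) a =
  swap_seqs (pref b I a) [seq sw_pos s | s <- S & swaps_on b a s].
Proof.
elim: S I => [|s S IH] I //=; rewrite IH pref_apply_swap.
by case: (swaps_on b a s).
Qed.

Lemma swap_seq_perm (T : eqType) p (l : seq T) : perm_eq (swap_seq p l) l.
Proof.
rewrite /swap_seq -[p.+2]add2n -drop_drop.
rewrite -[X in perm_eq _ X](cat_take_drop p l) perm_cat2l.
rewrite -[X in perm_eq _ X](cat_take_drop 2 (drop p l)) perm_cat2r.
by rewrite perm_rev.
Qed.

Lemma swap_seqs_perm (T : eqType) (l : seq T) ps : perm_eq (swap_seqs l ps) l.
Proof.
elim: ps l => [|p ps IH] l //=.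
exact: perm_trans (IH _) (swap_seq_perm _ _).
Qed.

Lemma swap_seq_index (T : eqType) p (l : seq T) x y : uniq l ->
  index x l - index y l <= (index x (swap_seq p l) - index y (swap_seq p l)).+1.
Proof.
rewrite /swap_seq -[p.+2]add2n -drop_drop.
rewrite -{1 2 3}(cat_take_drop p l).
case: (drop p l) => [|u [|v d]] /=; rewrite ?cats0 //.
rewrite take0 drop0 /rev /= !index_cat /= cat_uniq /= => _.
have hx := index_mem x (take p l); have hy := index_mem y (take p l).
case: (x \in take p l) hx; case: (y \in take p l) hy => hy hx;
  do ? case: ifP => _; lia.
Qed.

Lemma swap_seqs_displacement (T : eqType) (l : seq T) ps x y : uniq l ->
  index x (swap_seqs l ps) < index y (swap_seqs l ps) ->
  index x l - index y l <= size ps.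
Proof.
elim: ps l => [|p ps IH] l ul /=; first lia.
move=> /IH; rewrite (perm_uniq (swap_seq_perm p l)) => /(_ ul) h.
by apply: leq_trans (swap_seq_index p x y ul) _; rewrite ltnS.
Qed.

Definition cdist (r k t : nat) : nat := if k <= t then t - k else r - k + t.

Lemma index_rot_enum r (k t : 'I_r) : index t (rot k (enum 'I_r)) = cdist r k t.
Proof.
rewrite -(index_map val_inj) map_rot val_enum_ord /rot drop_iota take_iota add0n.
have Hk := ltn_ord k; have Ht := ltn_ord t.
rewrite (_ : val t = nat_of_ord t) // index_cat mem_iota /cdist; case: (leqP k t) => Hkt.
- rewrite ifT; last by lia.
  have E : nth 0 (iota k (r - k)) (t - k) = t by rewrite nth_iota; lia.
  by rewrite -[in index _ _]E index_uniq ?iota_uniq // size_iota; lia.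
- rewrite /= size_iota (_ : minn k r = k); last by lia.
  have E : nth 0 (iota 0 k) t = t by rewrite nth_iota; lia.
  by rewrite -[in index _ _]E index_uniq ?iota_uniq // size_iota; lia.
Qed.

Lemma cdist_shortcut r k t e : k < r -> t < r -> e < r -> t != k ->
  cdist r k t <= cdist r k e -> cdist r t e < cdist r k e.
Proof. by move=> hk ht he /eqP tk; rewrite /cdist; do ? case: ifP => ?; lia. Qed.

Lemma card_cdist_lt r (k : 'I_r) j : #|[set e : 'I_r | cdist r k e < j]| <= j.
Proof.
rewrite cardE -(size_map (fun e : 'I_r => cdist r k e)) -[j in _ <= j](size_iota 0 j).
apply: uniq_leq_size.
  rewrite map_inj_in_uniq ?enum_uniq // => e1 e2 _ _ E; apply: ord_inj.
  move: E; have := ltn_ord k; have := ltn_ord e1; have := ltn_ord e2; rewrite /cdist.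
  by do ? case: ifP => ?; lia.
by move=> x /mapP[e]; rewrite mem_enum inE => He ->; rewrite mem_iota; lia.
Qed.

(* Each point e is covered by the
   element of P closest to it from behind, by cdist_shortcut. *)
Lemma cyclic_cover r (P : pred 'I_r) (f : 'I_r -> 'I_r) (k0 : 'I_r) : P k0 ->
  (forall k, P k -> P (f k) /\ f k != k) ->
  r <= \sum_(k | P k) cdist r k (f k).
Proof.
move=> Pk0 Pf.
have cover (e : 'I_r) : exists2 k, P k & cdist r k e < cdist r k (f k).
  have [k Pk kmin] := arg_minnP (fun k : 'I_r => cdist r k e) Pk0.
  have [Pfk fk_k] := Pf k Pk.
  exists k => //; rewrite ltnNge; apply/negP => le.
  have := kmin _ Pfk; have := cdist_shortcut (ltn_ord k) (ltn_ord _) (ltn_ord e) fk_k le.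
  lia.
have many_pairs : r <= \sum_(e : 'I_r) \sum_(k | P k && (cdist r k e < cdist r k (f k))) 1.
  rewrite -[r in r <= _]card_ord -sum1_card; apply: leq_sum => e _.
  have [k Pk lt] := cover e.
  by rewrite (bigD1 k) /= ?Pk ?lt // leq_addr.
apply: leq_trans many_pairs _; rewrite -(exchange_big_dep xpredT) //=.
apply: leq_sum => k _; rewrite sum1dep_card; exact: card_cdist_lt.
Qed.

Lemma sum_count_disjoint (I : finType) T (F : I -> pred T) (P : pred I) (s : seq T) :
  (forall x k1 k2, P k1 -> P k2 -> F k1 x -> F k2 x -> k1 = k2) ->
  \sum_(k | P k) count (F k) s <= size s.
Proof.
move=> H; elim: s => [|x s IH] /=; first by rewrite big1.
rewrite big_split /= -add1n leq_add //.
case: (pickP (fun k => P k && F k x)) => [k0 /andP[P0 F0]|none].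
  rewrite (bigD1 k0) //= F0 big1 // => k /andP[Pk nk].
  by case Fk: (F k x) => //; rewrite (H x k k0 Pk P0 Fk F0) eqxx in nk.
by rewrite big1 // => k Pk; have := none k; rewrite Pk /= => ->.
Qed.

Lemma index_prefix (T : eqType) r (L p : seq T) x :
  take r L = p -> x \in p -> index x L = index x p.
Proof.
by move=> Lp xp; rewrite -(cat_take_drop r L) index_cat Lp xp.
Qed.

Lemma mem_prefix (T : eqType) r (L p : seq T) x :
  take r L = p -> size p = r -> index x L < r -> x \in p.
Proof.
move=> <- sz lt; have rL : r <= size L by rewrite -{1}sz size_take geq_minr.
by rewrite in_take_leq.
Qed.

Definition mate n (b : bool) (M : {set 'I_n * 'I_n}) (a a' : 'I_n) : bool :=
  if b then (a, a') \in M else (a', a) \in M.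

Lemma mate_functional n (M : {set 'I_n * 'I_n}) b x y z : is_matching M ->
  mate b M x z -> mate b M y z -> x = y.
Proof. by case=> [Mm Mw]; case: b => /=; [exact: Mw | exact: Mm]. Qed.

Lemma not_blocks n (I : SMinstance n) M (ag : bool -> 'I_n) :
  ~ blocks I M (ag true) (ag false) ->
  exists b a', mate b M (ag b) a' /\ ~~ prefers (pref b I (ag b)) (ag (~~ b)) a'.
Proof.
case/not_and_or => nb; have [a' na] := not_all_ex_not _ _ nb;
  have [Ma' np] := imply_to_and _ _ na;
  [exists true, a' | exists false, a']; by split => //; apply/negP.
Qed.

Lemma not_prefers_before n (l : seq 'I_n) x y :
  perm_eq l (enum 'I_n) -> x != y -> ~~ prefers l y x -> index x l < index y l.
Proof.
move=> pl xy; rewrite /prefers -leqNgt leq_eqVlt => /orP[/eqP E|//].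
have mem z : z \in l by rewrite (perm_mem pl) mem_enum.
by rewrite (index_inj x (mem x) (mem y) E) eqxx in xy.
Qed.

Section DummyCycle.

Variables (n r : nat) (I : SMinstance n) (dm dw : 'I_r -> 'I_n).
Hypotheses (validI : valid_instance I) (dm_inj : injective dm) (dw_inj : injective dw).
Hypothesis dm_pref :
  forall i : 'I_r, take r (mpref I (dm i)) = map dw (rot i (enum 'I_r)).
Hypothesis dw_pref :
  forall i : 'I_r, take r (wpref I (dw i)) = map dm (rot i (enum 'I_r)).
Variables (S : seq (swap n)) (M : {set 'I_n * 'I_n}).
Hypotheses (S_short : size S <= r - 1) (M_stable : stable_matching (apply_swaps I S) M).

Definition dummy (b : bool) (k : 'I_r) : 'I_n := if b then dm k else dw k.

Definition unmatched (k : 'I_r) : bool := (dm k, dw k) \notin M.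

Lemma dummy_inj b : injective (dummy b).
Proof. by case: b; [exact: dm_inj | exact: dw_inj]. Qed.

Lemma dummy_prefix b k :
  take r (pref b I (dummy b k)) = map (dummy (~~ b)) (rot k (enum 'I_r)).
Proof. by case: b; [exact: dm_pref | exact: dw_pref]. Qed.

Lemma pref_valid S' b a : perm_eq (pref b (apply_swaps I S') a) (enum 'I_n).
Proof.
rewrite pref_apply_swaps; apply: perm_trans (swap_seqs_perm _ _) _.
by case: validI => hm hw; case: b; [exact: hm | exact: hw].
Qed.

Lemma index_dummy b k t :
  index (dummy (~~ b) t) (pref b I (dummy b k)) = cdist r k t.
Proof.
rewrite (index_prefix (dummy_prefix b k)); last by rewrite map_f ?mem_rot ?mem_enum.
by rewrite index_map ?index_rot_enum //; exact: dummy_inj.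
Qed.

Lemma small_index_dummy b k x : index x (pref b I (dummy b k)) < r ->
  exists t, x = dummy (~~ b) t.
Proof.
have sz : size (map (dummy (~~ b)) (rot k (enum 'I_r))) = r.
  by rewrite size_map size_rot size_enum_ord.
by move=> /(mem_prefix (dummy_prefix b k) sz) /mapP[t _ ->]; exists t.
Qed.

Lemma matched_mate b t : (dm t, dw t) \in M -> mate b M (dummy b t) (dummy (~~ b) t).
Proof. by case: b. Qed.

Lemma mate_of_unmatched b k t : is_matching M -> unmatched k ->
  mate b M (dummy b k) (dummy (~~ b) t) -> unmatched t /\ t != k.
Proof.
move=> Mm uk Mkt.
have tk : t != k.
  by apply: contraNneq uk => tk; move: Mkt; rewrite tk /unmatched; case: b => /= ->.
split => //; rewrite /unmatched; apply: contraNN tk => Mt; apply/eqP/esym.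
exact: dummy_inj (mate_functional Mm Mkt (matched_mate b Mt)).
Qed.

Lemma unmatched_budget k : unmatched k -> exists t (b : bool),
  [/\ unmatched t, t != k & cdist r k t <= count (swaps_on b (dummy b k)) S].
Proof.
move=> uk; have [M_matching Mst] := M_stable.
have [b [a' [Ma' np]]] := @not_blocks _ _ M (dummy^~ k) (Mst (dm k) (dw k)).
have a'_ne : a' != dummy (~~ b) k.
  apply: contraTneq Ma' => ->; apply/negP.
  by move=> /(mate_of_unmatched M_matching uk) [_]; rewrite eqxx.
have := not_prefers_before (pref_valid S b (dummy b k)) a'_ne np.
rewrite pref_apply_swaps => /swap_seqs_displacement.
rewrite (perm_uniq (pref_valid [::] b (dummy b k))) enum_uniq size_map size_filter.
rewrite index_dummy (_ : cdist r k k = 0) ?subn0 => [/(_ isT) a'_budget|]; last first.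
  by rewrite /cdist leqnn subnn.
have [t a'_t] : exists t, a' = dummy (~~ b) t.
  apply: (small_index_dummy (k := k)); apply: leq_ltn_trans a'_budget _.
  apply: leq_ltn_trans (count_size _ S) _; have := ltn_ord k; lia.
move: Ma' a'_budget; rewrite a'_t index_dummy => Ma' budget.
have [ut tk] := mate_of_unmatched M_matching uk Ma'.
by exists t, b; split.
Qed.

Lemma swaps_on_dummy b1 b2 k1 k2 s :
  swaps_on b1 (dummy b1 k1) s -> swaps_on b2 (dummy b2 k2) s -> k1 = k2.
Proof.
move=> /andP[/eqP e1 /eqP a1] /andP[/eqP e2 /eqP a2].
have eb : b1 = b2 by rewrite -e1 -e2.
by move: a1 a2; rewrite eb => -> /dummy_inj.
Qed.

End DummyCycle.

(* Charging the covering arcs of cyclic_cover to the swaps via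
   unmatched_budget needs r swaps, but only r - 1 are available. *)
Theorem mainTheorem4 (n r : nat) (I : SMinstance n)
  (dm dw : 'I_r -> 'I_n) :
  valid_instance I ->
  injective dm -> injective dw ->
  (forall i : 'I_r, take r (mpref I (dm i)) = map dw (rot i (enum 'I_r))) ->
  (forall i : 'I_r, take r (wpref I (dw i)) = map dm (rot i (enum 'I_r))) ->
  forall S : seq (swap n), size S <= r - 1 -> all (@valid_swap n) S ->
  forall M : {set 'I_n * 'I_n}, stable_matching (apply_swaps I S) M ->
  forall i : 'I_r, (dm i, dw i) \in M.
Proof.
move=> validI dm_inj dw_inj dm_pref dw_pref S S_short _ M M_stable i.
apply: contraT => ui; pose unm := unmatched dm dw M.
have budget := unmatched_budget validI dm_inj dw_inj dm_pref dw_pref S_short M_stable.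
have choice k : exists p : 'I_r * bool, unm k ->
    [/\ unm p.1, p.1 != k & cdist r k p.1 <= count (swaps_on p.2 (dummy dm dw p.2 k)) S].
  case: (boolP (unm k)) => [/budget [t [b spec]] | uk]; first by exists (t, b).
  by exists (k, true).
have [f f_spec] := fin_all_exists choice.
have cover : r <= \sum_(k | unm k) cdist r k (f k).1.
  by apply: (cyclic_cover ui) => k /f_spec [].
have spent : \sum_(k | unm k) cdist r k (f k).1 <=
             \sum_(k | unm k) count (swaps_on (f k).2 (dummy dm dw (f k).2 k)) S.
  by apply: leq_sum => k /f_spec [].
have within : \sum_(k | unm k) count (swaps_on (f k).2 (dummy dm dw (f k).2 k)) S <= size S.
  apply: sum_count_disjoint => s k1 k2 _ _.
  by move=> h1 h2; exact: (swaps_on_dummy dm_inj dw_inj h1 h2).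
by have := ltn_ord i; lia.
Qed.
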